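(* Let $x\in\mathbb{R}\setminus\mathbb{Q}$. Then $\gamma_R(x)=\tau_R(2x)$, where for an irrational $y$ \[\tau_R(y)=\sup\Big\{\tau : |y-\tfrac{p}{q}|<q^{-\tau} \text{ for infinitely many irreducible rationals } \tfrac{p}{q} \text{ with } p,q \text{ not both odd}\Big\},\] \[\gamma_R(y)=\sup\Big\{\gamma : |y-\tfrac{p}{q}|<q^{-\gamma} \text{ for infinitely many irreducible rationals } \tfrac{p}{q} \text{ with } q\equiv0,1,3 \pmod 4\Big\}.\]
   Context: Irreducible rationals $p/q$ are written with $q\ge1$ and $\gcd(p,q)=1$. *)

From HB Require Import structures.
From mathcomp Require Import all_boot all_order all_algebra.
From mathcomp Require Import all_classical all_reals all_analysis.
Set Implicit Arguments. Unset Strict Implicit. Unset Printing Implicit Defensive.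
Import Order.TTheory GRing.Theory Num.Theory.
Local Open Scope ring_scope.
Local Open Scope classical_set_scope.

Definition approx_set (R : realType) (P : int -> nat -> bool) (y t : R)
  : set (int * nat) :=
  [set pq | (0 < pq.2)%N /\ coprime `|pq.1|%N pq.2 /\ P pq.1 pq.2 /\
            `|y - pq.1%:~R / pq.2%:R| < (pq.2%:R : R) `^ (- t)].

Definition approx_exponent (R : realType) (P : int -> nat -> bool) (y : R)
  : \bar R :=
  ereal_sup [set t%:E | t in [set t : R | infinite_set (approx_set P y t)]].

Definition tauR_cond (p : int) (q : nat) : bool := ~~ (odd `|p|%N && odd q).
Definition gammaR_cond (p : int) (q : nat) : bool := (q %% 4 != 2)%N.

Definition tau_R (R : realType) (y : R) : \bar R := approx_exponent tauR_cond y.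
Definition gamma_R (R : realType) (y : R) : \bar R := approx_exponent gammaR_cond y.

From HB Require Import structures.
From mathcomp Require Import all_boot all_order all_algebra.
From mathcomp Require Import all_classical all_reals all_analysis.
From mathcomp Require Import zify ring lra.
Set Implicit Arguments. Unset Strict Implicit. Unset Printing Implicit Defensive.
Import Order.TTheory GRing.Theory Num.Theory.
Local Open Scope ring_scope.
Local Open Scope classical_set_scope.

(* Doubling, written in lowest terms, maps the reduced fractions p/q with
   q <> 2 (mod 4) bijectively onto those with p, q not both odd: p/q goes to
   2p/q if q is odd and to p/(q/2) if 4 | q.  It doubles the distance to the
   point (x becomes 2x) and changes the denominator by a factor at most 2, so
   infinitely many approximations of x of exponent t of the first kind give
   infinitely many of 2x of exponent t - e of the second kind, for every e > 0;
   the inverse map gives the converse. *)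

Lemma infinite_set_transfer T (A B S : set T) (f g : T -> T) :
  finite_set (A `&` S) ->
  (forall a, A a -> ~ S a -> B (f a) /\ g (f a) = a) ->
  infinite_set A -> infinite_set B.
Proof.
move=> finAS fAB infA finB; apply: infA.
apply: (sub_finite_set (B := A `&` S `|` g @` B)); last first.
  by rewrite finite_setU; split => //; apply: finite_image.
move=> a Aa; case: (pselect (S a)) => Sa; [left | right] => //.
by have [Bfa gfa] := fAB a Aa Sa; exists (f a).
Qed.

Definition reduced_frac (pq : int * nat) : bool :=
  (0 < pq.2)%N && coprime `|pq.1| pq.2.

Definition double_frac (pq : int * nat) : int * nat :=
  if odd pq.2 then (pq.1 * 2, pq.2) else (pq.1, (pq.2 %/ 2)%N).

Definition halve_frac (rs : int * nat) : int * nat :=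
  if odd rs.2 then ((rs.1 %/ 2)%Z, rs.2) else (rs.1, (rs.2 * 2)%N).

Section Rescaling.
Context {R : realType}.

Lemma ereal_sup_EFin_le_shift (A B : set R) :
  (forall t, A t -> forall e, 0 < e -> B (t - e)) ->
  (ereal_sup [set t%:E | t in A] <= ereal_sup [set t%:E | t in B])%E.
Proof.
move=> AB; apply: ge_ereal_sup => _ [t At <-].
apply/lee_addgt0Pr => e e0.
have : ((t - e)%:E <= ereal_sup [set t%:E | t in B])%E.
  by apply: ereal_sup_ubound; exists (t - e) => //; apply: AB.
case: (ereal_sup _) => [r | |] //= h; last by rewrite leey.
by rewrite -EFinD lee_fin -lerBlDr -lee_fin.
Qed.

Lemma powR_nat_eventually_ge (e C : R) : 0 < e ->
  exists N : nat, forall q : nat, (N < q)%N -> C <= q%:R `^ e.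
Proof.
move=> e0; set r := Num.max 1 C.
have r1 : 1 <= r by rewrite le_max lexx.
exists (Num.truncn (r `^ e^-1)) => q Nq.
have rq : r `^ e^-1 <= q%:R.
  by apply/ltW/(lt_le_trans (truncnS_gt _)); rewrite ler_nat.
apply: (le_trans (_ : C <= r)); first by rewrite le_max lexx orbT.
have -> : r = (r `^ e^-1) `^ e.
  by rewrite -powRrM mulVf ?gt_eqF // powRr1 // (le_trans ler01 r1).
by apply: ge0_ler_powR; rewrite ?nnegrE ?powR_ge0 ?ler0n // ltW.
Qed.

Lemma approx_set_den_le_finite P (y t : R) (N : nat) :
  finite_set (approx_set P y t `&` [set pq | (pq.2 <= N)%N]).
Proof.
set B := N%:R * (`|y| + 1 + N%:R `^ (- t)); set M := Num.truncn B.
have finle n : finite_set [set m : nat | (m <= n)%N].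
  apply: (sub_finite_set (B := [set` iota 0 n.+1])); last exact: finite_seq.
  by move=> m /= mn; have := mem_iota 0 n.+1 m; rewrite add0n ltnS mn; apply.
apply: (sub_finite_set (B := (Posz @` [set m | (m <= M)%N]
    `|` (fun m : nat => - m%:Z) @` [set m | (m <= M)%N])
    `*` [set q | (q <= N)%N])).
  move=> [p q] [[/= q0 [_ [_ lt_pq]]] qN]; split => //=.
  have q0R : 0 < q%:R :> R by rewrite ltr0n.
  set z : R := p%:~R / q%:R.
  have z_le : `|z| <= `|y| + q%:R `^ (- t).
    have := ltW lt_pq; rewrite ler_distl => /andP[h1 h2].
    have := lexx `|y|; rewrite ler_norml => /andP[h3 h4].
    rewrite /z ler_norml; apply/andP; split; lra.
  have powq_le : q%:R `^ (- t) <= 1 + N%:R `^ (- t).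
    case: (leP 0 (- t)) => t0.
      apply: (le_trans _ (_ : N%:R `^ (- t) <= _)); last by rewrite lerDr.
      by apply: ge0_ler_powR; rewrite ?nnegrE ?ler0n ?ler_nat.
    apply: (le_trans _ (_ : 1 <= _)); last by rewrite lerDl powR_ge0.
    rewrite -[leRHS](powRr0 q%:R).
    by apply: ler_powR; [rewrite ler1n | exact: ltW].
  have p_le : `|p%:~R : R| <= B.
    have -> : p%:~R = z * q%:R :> R by rewrite divfK // gt_eqF.
    rewrite normrM (ger0_norm (ltW q0R)) /B mulrC.
    by apply: ler_pM; rewrite ?normr_ge0 ?ler0n ?ler_nat //; lra.
  have : (`|p| <= M)%N.
    rewrite /M truncn_ge_nat; last exact: le_trans (normr_ge0 _) p_le.
    by rewrite natr_absz intr_norm.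
  case: p {lt_pq z z_le p_le} => n pM; first by left; exists n.
  by right; exists n.+1; rewrite ?NegzE.
apply: finite_setX => //; rewrite finite_setU; split; exact: finite_image.
Qed.

Definition frac_val (pq : int * nat) : R := pq.1%:~R / pq.2%:R.

Definition rescales_fractions (P Q : int -> nat -> bool) (k : R)
    (f g : int * nat -> int * nat) : Prop :=
  forall pq, reduced_frac pq -> P pq.1 pq.2 ->
  [/\ reduced_frac (f pq) && Q (f pq).1 (f pq).2, g (f pq) = pq,
      [\/ pq.2 = (f pq).2, pq.2 = ((f pq).2 * 2)%N | (f pq).2 = (pq.2 * 2)%N]
    & frac_val (f pq) = k * frac_val pq].

Lemma powR_den_ratio_le (q q' : nat) (u : R) :
  [\/ q = q', q = (q' * 2)%N | q' = (q * 2)%N] ->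
  q%:R `^ u <= (1 + 2 `^ u + 2 `^ (- u)) * q'%:R `^ u.
Proof.
have a0 : 0 < 2 `^ u :> R by rewrite powR_gt0.
have C1 : 1 <= 1 + 2 `^ u + 2 `^ (- u) :> R.
  by rewrite -addrA lerDl addr_ge0 ?powR_ge0.
case=> ->; rewrite ?natrM ?powRM ?ler0n //.
- by rewrite ler_peMl ?powR_ge0.
- by rewrite mulrC ler_wpM2r ?powR_ge0 // addrAC lerDr addr_ge0 ?powR_ge0.
have -> : (1 + 2 `^ u + 2 `^ (- u)) * (q%:R `^ u * 2 `^ u)
          = q%:R `^ u * (1 + 2 `^ u + 2 `^ u * 2 `^ u) :> R.
  by rewrite powRN; field; rewrite gt_eqF.
by rewrite ler_peMr ?powR_ge0 // -addrA lerDl addr_ge0 ?mulr_ge0 ?powR_ge0.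
Qed.

Lemma rescaled_approx_lt (k y v t e : R) (q q' : nat) : 0 < k -> (0 < q')%N ->
  [\/ q = q', q = (q' * 2)%N | q' = (q * 2)%N] ->
  k * (1 + 2 `^ (- t) + 2 `^ t) <= q'%:R `^ e ->
  `|y - v| < q%:R `^ (- t) -> `|k * y - k * v| < q'%:R `^ (- (t - e)).
Proof.
move=> k0 q'0 den C_le lt_yv.
rewrite -mulrBr normrM gtr0_norm // [- (t - e)]opprB powRD; last first.
  by rewrite pnatr_eq0 -lt0n q'0 implybT.
apply: (lt_le_trans (_ : _ < k * q%:R `^ (- t))); first by rewrite ltr_pM2l.
apply: (le_trans (ler_wpM2l (ltW k0) (powR_den_ratio_le (- t) den))).
by rewrite opprK mulrA ler_wpM2r ?powR_ge0.
Qed.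

Lemma approx_exponent_le_rescaled P Q (k y : R) (f g : int * nat -> int * nat) :
  0 < k -> rescales_fractions P Q k f g ->
  (approx_exponent P y <= approx_exponent Q (k * y))%E.
Proof.
move=> k0 fPQ; apply: ereal_sup_EFin_le_shift => t infP e e0.
have [N HN] := powR_nat_eventually_ge (k * (1 + 2 `^ (- t) + 2 `^ t)) e0.
apply: (infinite_set_transfer (S := [set pq | (pq.2 <= N.*2)%N])
  (f := f) (g := g) _ _ infP).
  exact: approx_set_den_le_finite.
move=> [p q] [/= q0 [cop [Ppq lt_pq]]] /negP; rewrite -ltnNge => Nq.
have [] := fPQ (p, q); rewrite /reduced_frac ?q0 //=.
case: (f (p, q)) => r s /= /andP[/andP[s0 cop'] Qrs] gf den val.
do 4!split=> //.
rewrite -[_ / _]/(frac_val (r, s)) val.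
apply: (rescaled_approx_lt (q := q)) => //=; apply: HN.
by case: den => den; lia.
Qed.

Lemma double_frac_rescales :
  rescales_fractions gammaR_cond tauR_cond 2 double_frac halve_frac.
Proof.
move=> [p q] /andP[/= q0 cop] /= cond; rewrite /double_frac /=.
case: ifP => oq.
  rewrite /halve_frac /= oq mulzK //; split => //.
  - rewrite /reduced_frac /tauR_cond /= q0 abszM coprimeMl coprime2n oq cop.
    by rewrite oddM andbF.
  - exact: Or31.
  - by rewrite /frac_val /= intrM; ring.
have [q' def_q] : exists q', q = (q' * 2)%N.
  by exists (q %/ 2)%N; rewrite divnK // dvdn2 oq.
subst q; have oq' : odd q' = false by move: cond; rewrite /gammaR_cond; lia.
rewrite mulnK // /halve_frac /= oq'; split => //.
- rewrite /reduced_frac /tauR_cond /= oq' andbF andbT.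
  by rewrite (coprime_dvdr (dvdn_mulr 2 (dvdnn q')) cop) andbT; lia.
- exact: Or32.
- have q'0 : q'%:R != 0 :> R by rewrite pnatr_eq0; lia.
  by rewrite /frac_val /= natrM; field.
Qed.

Lemma halve_frac_rescales :
  rescales_fractions tauR_cond gammaR_cond 2^-1 halve_frac double_frac.
Proof.
move=> [r s] /andP[/= s0 cop] /= cond; rewrite /halve_frac /=.
have s0R : s%:R != 0 :> R by rewrite pnatr_eq0 -lt0n.
case: ifP => os.
  have [r' def_r] : exists r', r = r' * 2.
    exists (r %/ 2)%Z; rewrite divzK // dvdzE /= dvdn2.
    by move: cond; rewrite /tauR_cond os andbT.
  subst r; rewrite mulzK // /double_frac /= os; split => //.
  - move: cop; rewrite /reduced_frac /gammaR_cond /= abszM coprimeMl.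
    case/andP=> -> _.
    by rewrite s0 /=; lia.
  - exact: Or31.
  - by rewrite /frac_val /= intrM; field.
have odd_r : odd `|r|.
  have s2 : (2 %| s)%N by rewrite dvdn2 os.
  by move: cop; rewrite -(divnK s2) coprimeMr coprimen2 => /andP[].
rewrite /double_frac /= oddM andbF mulnK //; split => //.
- rewrite /reduced_frac /gammaR_cond /= coprimeMr coprimen2 odd_r cop /=.
  by apply/andP; split; lia.
- exact: Or33.
- by rewrite /frac_val /= natrM; field.
Qed.

End Rescaling.

Theorem lemma3p3 (R : realType) (x : R) (hx : irrational x) :
  gamma_R x = tau_R (2 * x).
Proof.
rewrite /gamma_R /tau_R; apply/le_anti/andP; split.
  exact: approx_exponent_le_rescaled _ _ double_frac_rescales.
have := approx_exponent_le_rescaled (2 * x) _ halve_frac_rescales.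
by rewrite mulKf ?pnatr_eq0 //; apply; rewrite invr_gt0.
Qed.
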